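(* Let $\beta,\delta\in(0,1)$, $K>0$, $d_1,d_2>0$, and let $\eta_1,\eta_2\ge0$ be constants. Consider $$\frac{df}{dt}=\tfrac12 fm\beta L-\delta f-\eta_1\frac{f}{f+d_1},\qquad \frac{dm}{dt}=\tfrac12 fm\beta L-\delta m+\eta_2\frac{m}{m+d_2},\qquad L=1-\frac{f+m}{K}.$$ If $\beta K<2\delta+\frac{\eta_1}{K+d_1}-\frac{\eta_2}{d_2}$ and $\delta>\frac{\eta_2}{d_2}$, then the trivial equilibrium $(0,0)$ is globally asymptotically stable.
   Context: $f,m$ are female and male densities, with populations considered in the region $0\le f,m$, $f+m\le K$. The model uses saturating female harvesting and male stocking. *)

From Stdlib Require Import Reals.
From Coquelicot Require Import Coquelicot.
Open Scope R_scope.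

Definition Lfun (K f m : R) : R := 1 - (f + m) / K.

Definition rhs_f (beta delta K d1 eta1 : R) (f m : R) : R :=
  / 2 * f * m * beta * Lfun K f m - delta * f - eta1 * (f / (f + d1)).
Definition rhs_m (beta delta K d2 eta2 : R) (f m : R) : R :=
  / 2 * f * m * beta * Lfun K f m - delta * m + eta2 * (m / (m + d2)).

Definition in_region (K f m : R) : Prop := 0 <= f /\ 0 <= m /\ f + m <= K.

Definition is_solution (beta delta K d1 d2 eta1 eta2 : R) (f m : R -> R) : Prop :=
  filterlim f (at_right 0) (locally (f 0)) /\
  filterlim m (at_right 0) (locally (m 0)) /\
  (forall t, 0 < t ->
     is_derive f t (rhs_f beta delta K d1 eta1 (f t) (m t)) /\
     is_derive m t (rhs_m beta delta K d2 eta2 (f t) (m t))).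

Definition eucl (x y : R) : R := sqrt (x ^ 2 + y ^ 2).

Definition GAS_origin (beta delta K d1 d2 eta1 eta2 : R) : Prop :=
  rhs_f beta delta K d1 eta1 0 0 = 0 /\ rhs_m beta delta K d2 eta2 0 0 = 0 /\
  (forall eps, 0 < eps -> exists r, 0 < r /\
     forall f m : R -> R, is_solution beta delta K d1 d2 eta1 eta2 f m ->
       in_region K (f 0) (m 0) -> eucl (f 0) (m 0) < r ->
       forall t, 0 <= t -> eucl (f t) (m t) < eps) /\
  (forall f m : R -> R, is_solution beta delta K d1 d2 eta1 eta2 f m ->
     in_region K (f 0) (m 0) ->
     is_lim f p_infty 0 /\ is_lim m p_infty 0).

From Stdlib Require Import Reals Lra Psatz Classical.
From Coquelicot Require Import Coquelicot.
Open Scope R_scope.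

(* The region D is forward invariant: each population equals itself times a
   per-capita rate that is bounded near D, so neither can change sign, and on the
   face f + m = K the total has nonpositive derivative because L <= 0 there and
   delta > eta2/d2 dominates the stocking term.  Inside D the total V = f + m
   satisfies V' <= -c V with c = min(A, B, (A + B - beta K)/2), where
   A = delta + eta1/(K + d1) and B = delta - eta2/d2 bound the per-capita losses of
   f and m from below and beta f m <= beta K min(f, m).  The hypotheses make c > 0,
   so V, hence f and m, decay exponentially: this gives stability and attraction. *)

Definition right_cont (h : R -> R) (a : R) : Prop :=
  filterlim h (at_right a) (locally (h a)).

Lemma ball_R (x e y : R) : ball x e y <-> Rabs (y - x) < e.
Proof. reflexivity. Qed.

Lemma is_derive_continuous (h : R -> R) (a d : R) : is_derive h a d -> continuous h a.
Proof.
  intros H. apply (ex_derive_continuous (K := R_AbsRing) (V := R_NormedModule)).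
  exists d; exact H.
Qed.

Lemma right_cont_of_continuous (h : R -> R) (a : R) : continuous h a -> right_cont h a.
Proof.
  intros Hc. eapply filterlim_filter_le_1; [|exact Hc].
  intros P HP. apply filter_imp with (2 := HP). auto.
Qed.

Lemma right_cont_plus (u v : R -> R) (a : R) :
  right_cont u a -> right_cont v a -> right_cont (fun t => u t + v t) a.
Proof.
  intros Hu Hv. apply (filterlim_comp_2 u v Rplus Hu Hv).
  apply (filterlim_plus (V := R_NormedModule)).
Qed.

Lemma right_cont_mult (u v : R -> R) (a : R) :
  right_cont u a -> right_cont v a -> right_cont (fun t => u t * v t) a.
Proof.
  intros Hu Hv. apply (filterlim_comp_2 u v Rmult Hu Hv).
  apply (filterlim_mult (K := R_AbsRing)).
Qed.

Lemma right_cont_opp (u : R -> R) (a : R) : right_cont u a -> right_cont (fun t => - u t) a.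
Proof.
  intros Hu. eapply filterlim_comp; [exact Hu|].
  apply (filterlim_opp (V := R_NormedModule)).
Qed.

Lemma right_cont_exp (k a : R) : right_cont (fun t => exp (k * t)) a.
Proof.
  apply right_cont_of_continuous, (is_derive_continuous _ _ (k * exp (k * a))).
  auto_derive; [auto | ring].
Qed.

Lemma right_cont_near (h : R -> R) (a eps : R) : right_cont h a -> 0 < eps ->
  exists del, 0 < del /\ forall t, a < t < a + del -> Rabs (h t - h a) < eps.
Proof.
  intros H He.
  destruct (proj1 (filterlim_locally _ _) H (mkposreal eps He)) as [del Hd].
  exists del. split; [apply cond_pos|]. intros t Ht.
  apply (Hd t); [apply (proj2 (ball_R _ _ _)); rewrite Rabs_right|]; lra.
Qed.

Lemma continuous_gt_near (g : R -> R) (c s : R) : continuous g s -> c < g s ->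
  exists del, 0 < del /\ forall t, Rabs (t - s) < del -> c < g t.
Proof.
  intros H Hc. assert (He : 0 < g s - c) by lra.
  destruct (proj1 (filterlim_locally _ _) H (mkposreal _ He)) as [del Hd].
  exists del. split; [apply cond_pos|]. intros t Ht.
  specialize (Hd t Ht). apply (proj1 (ball_R _ _ _)), Rabs_def2 in Hd. simpl in Hd. lra.
Qed.

Lemma continuous_le_of_le_before (g : R -> R) (c T : R) : 0 < T -> continuous g T ->
  (forall s, 0 <= s < T -> g s <= c) -> g T <= c.
Proof.
  intros HT Hc Hs.
  apply (filterlim_le (F := at_left T) g (fun _ => c) (g T) c).
  - exists (mkposreal T HT). intros s Hb Hlt. apply (proj1 (ball_R _ _ _)), Rabs_def2 in Hb.
    simpl in Hb. apply Hs. lra.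
  - eapply filterlim_filter_le_1; [|exact Hc].
    intros P HP. apply filter_imp with (2 := HP). auto.
  - apply filterlim_const.
Qed.

Lemma le_of_is_derive_nonpos (h dh : R -> R) (a b : R) : a < b ->
  (forall t, a < t <= b -> is_derive h t (dh t)) ->
  (forall t, a < t <= b -> dh t <= 0) -> right_cont h a -> h b <= h a.
Proof.
  intros Hab Hd Hn Hc.
  assert (Hbu : forall u, a < u <= b -> h b <= h u).
  { intros u Hu. destruct (Req_dec u b) as [->|Hne]; [lra|].
    destruct (MVT_cor2 h dh u b) as [c [Hmvt Hc']]; [lra| |].
    - intros c Hc'. apply is_derive_Reals, Hd. lra.
    - assert (dh c <= 0) by (apply Hn; lra). nra. }
  apply (filterlim_le (F := at_right a) (fun _ => h b) h (h b) (h a)).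
  - assert (Hba : 0 < b - a) by lra.
    exists (mkposreal _ Hba). intros u Hb Hlt.
    apply (proj1 (ball_R _ _ _)), Rabs_def2 in Hb. simpl in Hb. apply Hbu. lra.
  - apply filterlim_const.
  - exact Hc.
Qed.

Lemma le_level_preserved (y dy : R -> R) (c a b : R) : a < b ->
  (forall t, a < t <= b -> is_derive y t (dy t)) ->
  (forall t, a < t <= b -> c <= y t -> dy t <= 0) ->
  right_cont y a -> y a <= c -> y b <= c.
Proof.
  intros Hab Hd Hn Hc Ha.
  destruct (Rle_or_lt (y b) c) as [H|Hyb]; [exact H|]. exfalso.
  set (E := fun t => a <= t <= b /\ y t <= c).
  destruct (completeness E) as [s [Hub Hlub]].
  { exists b. intros t [Ht _]. lra. }
  { exists a. split; [lra|exact Ha]. }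
  assert (Has : a <= s) by (apply Hub; split; [lra|exact Ha]).
  assert (Hsb : s <= b) by (apply Hlub; intros t [Ht _]; lra).
  (* [s] is the last time at which [y <= c] *)
  assert (Hys : y s <= c).
  { destruct (Req_dec s a) as [->|Hne]; [exact Ha|].
    apply Rnot_lt_le. intros Hlt.
    destruct (continuous_gt_near y c s (is_derive_continuous _ _ _ (Hd s ltac:(lra))) Hlt)
      as [del [Hdel Hnear]].
    assert (s <= s - del); [|lra].
    apply Hlub. intros t [Ht Hyt]. apply Rnot_lt_le. intros Hts.
    assert (t <= s) by (apply Hub; split; assumption).
    assert (c < y t) by (apply Hnear; rewrite Rabs_left1; lra). lra. }
  assert (Hsb' : s < b) by (destruct (Req_dec s b) as [->|]; lra).
  assert (Habove : forall t, s < t <= b -> c < y t).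
  { intros t Ht. apply Rnot_le_lt. intros Hyt.
    assert (t <= s) by (apply Hub; split; [lra|exact Hyt]). lra. }
  assert (y b <= y s); [|lra].
  apply (le_of_is_derive_nonpos y dy s b Hsb').
  - intros t Ht; apply Hd; lra.
  - intros t Ht; apply Hn; [lra|]. left; apply Habove; lra.
  - destruct (Req_dec s a) as [->|Hne]; [exact Hc|].
    apply right_cont_of_continuous, (is_derive_continuous _ _ (dy s)), Hd. lra.
Qed.

Lemma is_derive_mult_exp (u : R -> R) (t du k : R) : is_derive u t du ->
  is_derive (fun s => u s * exp (k * s)) t ((du + k * u t) * exp (k * t)).
Proof.
  intros H. eapply is_derive_ext; [intros s; reflexivity|].
  replace ((du + k * u t) * exp (k * t)) with (du * exp (k * t) + u t * (k * exp (k * t))) by ring.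
  apply (is_derive_mult u (fun s => exp (k * s)) t du _ H); [auto_derive; [auto|ring]|].
  intros; apply Rmult_comm.
Qed.

Lemma nonneg_preserved (u g : R -> R) (M a b : R) : a < b ->
  (forall t, a < t <= b -> is_derive u t (u t * g t)) ->
  (forall t, a < t <= b -> g t <= M) -> right_cont u a -> 0 <= u a -> 0 <= u b.
Proof.
  intros Hab Hd Hg Hc Ha.
  (* [-u e^(-M t)] has derivative [u (M - g) e^(-M t)], which is [<= 0] where [u <= 0] *)
  set (y := fun t => - u t * exp (- M * t)).
  assert (Hyb : y b <= 0).
  { apply (le_level_preserved y (fun t => (- (u t * g t) + - M * - u t) * exp (- M * t)) 0 a b Hab).
    - intros t Ht. apply (is_derive_mult_exp (fun t => - u t)).
      apply (is_derive_opp (K := R_AbsRing) (V := R_NormedModule) u t _ (Hd t Ht)).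
    - intros t Ht Hyt. unfold y in Hyt. pose proof (exp_pos (- M * t)). pose proof (Hg t Ht).
      assert (u t <= 0) by nra. nra.
    - apply right_cont_mult; [apply right_cont_opp, Hc|apply right_cont_exp].
    - unfold y. pose proof (exp_pos (- M * a)). nra. }
  unfold y in Hyb. pose proof (exp_pos (- M * b)). nra.
Qed.

Lemma continuous_induction (P : R -> Prop) : P 0 ->
  (forall T, 0 <= T -> (forall s, 0 <= s <= T -> P s) ->
     exists del, 0 < del /\ forall s, T <= s <= T + del -> P s) ->
  (forall T, 0 < T -> (forall s, 0 <= s < T -> P s) -> P T) ->
  forall t, 0 <= t -> P t.
Proof.
  intros H0 Hext Hcl t1 Ht1. apply NNPP. intros Hn1.
  set (E := fun t => 0 <= t /\ forall s, 0 <= s <= t -> P s).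
  assert (HE0 : E 0) by (split; [lra|]; intros s Hs; replace s with 0 by lra; exact H0).
  destruct (completeness E) as [T [Hub Hlub]].
  { exists t1. intros t [Ht Hs]. apply Rnot_lt_le. intros Hlt. apply Hn1, Hs. lra. }
  { exists 0. exact HE0. }
  assert (HT0 : 0 <= T) by (apply Hub, HE0).
  assert (Hbelow : forall s, 0 <= s < T -> P s).
  { intros s Hs. apply NNPP. intros Hns.
    assert (T <= s); [|lra]. apply Hlub. intros t [Ht Hts].
    apply Rnot_lt_le. intros Hlt. apply Hns, Hts. lra. }
  assert (HupT : forall s, 0 <= s <= T -> P s).
  { intros s Hs. destruct (Req_dec s T) as [->|]; [|apply Hbelow; lra].
    destruct (Req_dec T 0) as [->|]; [exact H0|]. apply Hcl; [lra|exact Hbelow]. }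
  destruct (Hext T HT0 HupT) as [del [Hdel Hd]].
  assert (T + del <= T); [|lra].
  apply Hub. split; [lra|]. intros s Hs.
  destruct (Rle_or_lt s T); [apply HupT|apply Hd]; lra.
Qed.

Lemma le_exp_decay (V dV : R -> R) (c : R) : right_cont V 0 ->
  (forall t, 0 < t -> is_derive V t (dV t)) -> (forall t, 0 < t -> dV t <= - c * V t) ->
  forall t, 0 <= t -> V t <= V 0 * exp (- c * t).
Proof.
  intros H0 Hd Hn t Ht.
  destruct (Req_dec t 0) as [->|Hne]; [rewrite Rmult_0_r, exp_0; lra|].
  assert (HW : V t * exp (c * t) <= V 0 * exp (c * 0)).
  { apply (le_of_is_derive_nonpos (fun s => V s * exp (c * s))
             (fun s => (dV s + c * V s) * exp (c * s)) 0 t); [lra| | |].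
    - intros s Hs. apply is_derive_mult_exp, Hd. lra.
    - intros s Hs. pose proof (exp_pos (c * s)). pose proof (Hn s ltac:(lra)). nra.
    - apply right_cont_mult; [exact H0|apply right_cont_exp]. }
  rewrite Rmult_0_r, exp_0, Rmult_1_r in HW.
  replace (V t) with (V t * exp (c * t) * exp (- c * t))
    by (rewrite Rmult_assoc, <- exp_plus; replace (c * t + - c * t) with 0 by ring;
        rewrite exp_0; ring).
  apply Rmult_le_compat_r; [left; apply exp_pos|exact HW].
Qed.

Lemma exp_decay_le_1 (c t : R) : 0 <= c -> 0 <= t -> exp (- c * t) <= 1.
Proof.
  intros Hc Ht. rewrite <- exp_0.
  destruct (Rle_lt_or_eq_dec (- c * t) 0) as [Hlt|Heq]; [nra| |].
  - left. apply exp_increasing, Hlt.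
  - rewrite Heq. lra.
Qed.

Lemma is_lim_exp_decay (c : R) : 0 < c -> is_lim (fun t => exp (- c * t)) p_infty 0.
Proof.
  intros Hc. apply (is_lim_comp exp (fun t => - c * t) p_infty 0 m_infty).
  - exact is_lim_exp_m.
  - replace m_infty with (Rbar_mult (- c) p_infty).
    + apply is_lim_scal_l, is_lim_id.
    + simpl. case Rle_dec; intros; [|reflexivity]. case Rle_lt_or_eq_dec; intros; lra.
  - exists 0. intros t _. discriminate.
Qed.

Lemma is_lim_0_of_exp_bound (g : R -> R) (C c : R) : 0 < c ->
  (forall t, 0 <= t -> 0 <= g t <= C * exp (- c * t)) -> is_lim g p_infty 0.
Proof.
  intros Hc Hg. apply (is_lim_le_le_loc (fun _ => 0) (fun t => C * exp (- c * t))).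
  - exists 0. intros t Ht. apply Hg. lra.
  - apply is_lim_const.
  - replace (Finite 0) with (Rbar_mult C 0) by (simpl; f_equal; ring).
    apply is_lim_scal_l, is_lim_exp_decay, Hc.
Qed.

Lemma eucl_le_add (x y : R) : 0 <= x -> 0 <= y -> eucl x y <= x + y.
Proof.
  intros Hx Hy. unfold eucl. rewrite <- (sqrt_pow2 (x + y)) by lra.
  apply sqrt_le_1_alt. nra.
Qed.

Lemma add_le_2eucl (x y : R) : 0 <= x -> 0 <= y -> x + y <= 2 * eucl x y.
Proof.
  intros Hx Hy. unfold eucl.
  assert (x <= sqrt (x ^ 2 + y ^ 2))
    by (rewrite <- (sqrt_pow2 x Hx) at 1; apply sqrt_le_1_alt; nra).
  assert (y <= sqrt (x ^ 2 + y ^ 2))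
    by (rewrite <- (sqrt_pow2 y Hy) at 1; apply sqrt_le_1_alt; nra).
  lra.
Qed.

Section Model.

Variables beta delta K d1 d2 eta1 eta2 : R.
Hypothesis Hbeta : 0 <= beta.
Hypothesis HK : 0 < K.
Hypothesis Hd1 : 0 < d1.
Hypothesis Hd2 : 0 < d2.
Hypothesis Heta1 : 0 <= eta1.
Hypothesis Heta2 : 0 <= eta2.
Hypothesis Hdelta : eta2 / d2 < delta.
Hypothesis Hstab : beta * K < 2 * delta + eta1 / (K + d1) - eta2 / d2.

Definition rate_f (f m : R) : R := / 2 * m * beta * Lfun K f m - delta - eta1 / (f + d1).
Definition rate_m (f m : R) : R := / 2 * f * beta * Lfun K f m - delta + eta2 / (m + d2).

Lemma rhs_f_rate (f m : R) : rhs_f beta delta K d1 eta1 f m = f * rate_f f m.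
Proof. unfold rhs_f, rate_f, Rdiv. ring. Qed.

Lemma rhs_m_rate (f m : R) : rhs_m beta delta K d2 eta2 f m = m * rate_m f m.
Proof. unfold rhs_m, rate_m, Rdiv. ring. Qed.

Lemma eta2_div_d2_ge0 : 0 <= eta2 / d2.
Proof. apply Rdiv_le_0_compat; lra. Qed.

Lemma rates_bounded : exists M, forall f m,
  Rabs f <= K + 1 -> Rabs m <= K + 1 -> 0 < f + d1 -> d2 / 2 <= m + d2 ->
  rate_f f m <= M /\ rate_m f m <= M.
Proof.
  set (S := beta * (K + 1) * (1 + 2 * (K + 1) / K)).
  exists (S + 2 * eta2 / d2). intros f m Hf Hm Hfd Hmd.
  pose proof eta2_div_d2_ge0.
  assert (HL : Rabs (Lfun K f m) <= 1 + 2 * (K + 1) / K).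
  { unfold Lfun. eapply Rle_trans; [apply Rabs_triang|].
    rewrite Rabs_Ropp, Rabs_R1, Rabs_div, (Rabs_right K) by lra.
    apply Rplus_le_compat_l, Rmult_le_compat_r; [left; apply Rinv_0_lt_compat; lra|].
    eapply Rle_trans; [apply Rabs_triang|]. lra. }
  assert (Hmass : forall z, Rabs z <= K + 1 -> / 2 * z * beta * Lfun K f m <= S).
  { intros z Hz. eapply Rle_trans; [apply Rle_abs|].
    rewrite !Rabs_mult, Rabs_inv, (Rabs_right 2), (Rabs_right beta) by lra.
    pose proof (Rabs_pos z). pose proof (Rabs_pos (Lfun K f m)).
    assert (Hzl : Rabs z * Rabs (Lfun K f m) <= (K + 1) * (1 + 2 * (K + 1) / K))
      by (apply Rmult_le_compat; assumption).
    apply (Rmult_le_compat_l beta) in Hzl; [|exact Hbeta].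
    assert (0 <= beta * (Rabs z * Rabs (Lfun K f m)))
      by (apply Rmult_le_pos; [exact Hbeta|apply Rmult_le_pos; assumption]).
    unfold S. lra. }
  assert (0 <= eta1 / (f + d1)) by (apply Rdiv_le_0_compat; lra).
  assert (eta2 / (m + d2) <= 2 * eta2 / d2).
  { replace (2 * eta2 / d2) with (eta2 / (d2 / 2)) by (field; lra).
    apply Rmult_le_compat_l; [lra|]. apply Rinv_le_contravar; lra. }
  unfold rate_f, rate_m. split; [pose proof (Hmass m Hm)|pose proof (Hmass f Hf)]; lra.
Qed.

Lemma Lfun_nonpos (f m : R) : K <= f + m -> Lfun K f m <= 0.
Proof.
  intros Hs. unfold Lfun.
  assert (1 <= (f + m) / K); [|lra].
  apply (Rmult_le_reg_r K); [lra|]. unfold Rdiv. rewrite Rmult_assoc, Rinv_l; lra.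
Qed.

Lemma Lfun_le_1 (f m : R) : 0 <= f -> 0 <= m -> Lfun K f m <= 1.
Proof.
  intros Hf Hm. unfold Lfun. assert (0 <= (f + m) / K) by (apply Rdiv_le_0_compat; lra). lra.
Qed.

Lemma stocking_le_linear (m : R) : 0 <= m -> eta2 * (m / (m + d2)) <= eta2 / d2 * m.
Proof.
  intros Hm. unfold Rdiv. rewrite (Rmult_comm m), <- Rmult_assoc.
  apply Rmult_le_compat_r; [lra|]. apply Rmult_le_compat_l; [lra|].
  apply Rinv_le_contravar; lra.
Qed.

Lemma rhs_sum_nonpos_outside (f m : R) : 0 <= f -> 0 <= m -> K <= f + m ->
  rhs_f beta delta K d1 eta1 f m + rhs_m beta delta K d2 eta2 f m <= 0.
Proof.
  intros Hf Hm Hs. unfold rhs_f, rhs_m.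
  assert (0 <= f * m * beta) by (apply Rmult_le_pos; [apply Rmult_le_pos|]; lra).
  assert (f * m * beta * Lfun K f m <= 0) by (pose proof (Lfun_nonpos f m Hs); nra).
  assert (0 <= eta1 * (f / (f + d1))) by (apply Rmult_le_pos; [|apply Rdiv_le_0_compat]; lra).
  pose proof (stocking_le_linear m Hm).
  assert (eta2 / d2 * m <= delta * m) by (apply Rmult_le_compat_r; lra).
  assert (0 <= delta * f) by (pose proof eta2_div_d2_ge0; nra).
  lra.
Qed.

Definition decay_rate : R :=
  let A := delta + eta1 / (K + d1) in
  let B := delta - eta2 / d2 in
  Rmin A (Rmin B ((A + B - beta * K) / 2)).

Lemma decay_rate_pos : 0 < decay_rate.
Proof.
  pose proof eta2_div_d2_ge0.
  assert (0 <= eta1 / (K + d1)) by (apply Rdiv_le_0_compat; lra).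
  unfold decay_rate. repeat apply Rmin_glb_lt; lra.
Qed.

Lemma rhs_sum_le_decay (f m : R) : in_region K f m ->
  rhs_f beta delta K d1 eta1 f m + rhs_m beta delta K d2 eta2 f m <= - decay_rate * (f + m).
Proof.
  intros [Hf [Hm Hs]]. unfold decay_rate.
  set (A := delta + eta1 / (K + d1)). set (B := delta - eta2 / d2).
  set (c := Rmin A (Rmin B ((A + B - beta * K) / 2))).
  assert (HcA : c <= A) by apply Rmin_l.
  assert (HcB : c <= B) by (eapply Rle_trans; [apply Rmin_r|apply Rmin_l]).
  assert (Hc : beta * K <= A + B - 2 * c) by (assert (c <= (A + B - beta * K) / 2)
    by (eapply Rle_trans; [apply Rmin_r|apply Rmin_r]); lra).
  assert (Hmass : beta * f * m <= (A - c) * f + (B - c) * m).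
  { clearbody A B c. destruct (Rle_or_lt f m).
    - assert (beta * f * m <= beta * K * f) by (assert (0 <= beta * f) by nra; nra).
      assert (beta * K * f <= (A + B - 2 * c) * f) by (apply Rmult_le_compat_r; lra).
      nra.
    - assert (beta * f * m <= beta * K * m) by (assert (0 <= beta * m) by nra; nra).
      assert (beta * K * m <= (A + B - 2 * c) * m) by (apply Rmult_le_compat_r; lra).
      nra. }
  assert (f * m * beta * Lfun K f m <= beta * f * m)
    by (pose proof (Lfun_le_1 f m Hf Hm); assert (0 <= f * m * beta) by
          (apply Rmult_le_pos; [apply Rmult_le_pos|]; lra); nra).
  assert (eta1 / (K + d1) * f <= eta1 * (f / (f + d1))).
  { unfold Rdiv. rewrite (Rmult_comm f), <- Rmult_assoc. apply Rmult_le_compat_r; [lra|].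
    apply Rmult_le_compat_l; [lra|]. apply Rinv_le_contravar; lra. }
  pose proof (stocking_le_linear m Hm).
  unfold rhs_f, rhs_m, A, B in *. lra.
Qed.

Section Solution.

Variables f m : R -> R.
Hypothesis Hsol : is_solution beta delta K d1 d2 eta1 eta2 f m.

Lemma solution_derive_rates (t : R) : 0 < t ->
  is_derive f t (f t * rate_f (f t) (m t)) /\ is_derive m t (m t * rate_m (f t) (m t)).
Proof.
  intros Ht. destruct Hsol as [_ [_ Hd]]. rewrite <- rhs_f_rate, <- rhs_m_rate. exact (Hd t Ht).
Qed.

Lemma solution_derive_sum (t : R) : 0 < t ->
  is_derive (fun s => f s + m s) t
    (rhs_f beta delta K d1 eta1 (f t) (m t) + rhs_m beta delta K d2 eta2 (f t) (m t)).
Proof.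
  intros Ht. destruct Hsol as [_ [_ Hd]].
  apply (is_derive_plus (K := R_AbsRing) (V := R_NormedModule)); apply (Hd t Ht).
Qed.

Lemma solution_continuous (t : R) : 0 < t -> continuous f t /\ continuous m t.
Proof.
  intros Ht. destruct (solution_derive_rates t Ht) as [Hf Hm].
  split; eapply is_derive_continuous; eassumption.
Qed.

Lemma solution_right_cont (t : R) : 0 <= t -> right_cont f t /\ right_cont m t.
Proof.
  intros Ht. destruct (Req_dec t 0) as [->|Hne]; [destruct Hsol as [? [? _]]; split; assumption|].
  destruct (solution_continuous t ltac:(lra)).
  split; apply right_cont_of_continuous; assumption.
Qed.

Lemma rates_bounded_after (T : R) : 0 <= T -> in_region K (f T) (m T) ->
  exists del M, 0 < del /\ forall t, T < t <= T + del ->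
    rate_f (f t) (m t) <= M /\ rate_m (f t) (m t) <= M.
Proof.
  intros HT [HfT [HmT HsT]].
  destruct rates_bounded as [M HM].
  (* [rho] keeps [f] and [m] in the box of [rates_bounded], away from the poles of the
     saturating terms *)
  set (rho := Rmin 1 (Rmin (d1 / 2) (d2 / 2))).
  assert (Hrho : 0 < rho) by (unfold rho; repeat apply Rmin_glb_lt; lra).
  assert (Hrho1 : rho <= 1) by apply Rmin_l.
  assert (Hrho2 : rho <= d1 / 2) by (eapply Rle_trans; [apply Rmin_r|apply Rmin_l]).
  assert (Hrho3 : rho <= d2 / 2) by (eapply Rle_trans; [apply Rmin_r|apply Rmin_r]).
  destruct (solution_right_cont T HT) as [Hfc Hmc].
  destruct (right_cont_near f T rho Hfc Hrho) as [delf [Hdelf Hf]].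
  destruct (right_cont_near m T rho Hmc Hrho) as [delm [Hdelm Hm]].
  assert (Hdel : 0 < Rmin delf delm) by (apply Rmin_glb_lt; assumption).
  exists (Rmin delf delm / 2), M. split; [lra|].
  intros t Ht. pose proof (Rmin_l delf delm). pose proof (Rmin_r delf delm).
  assert (Hft : Rabs (f t - f T) < rho) by (apply Hf; lra).
  assert (Hmt : Rabs (m t - m T) < rho) by (apply Hm; lra).
  apply Rabs_def2 in Hft, Hmt.
  apply HM; try apply Rabs_le; lra.
Qed.

Lemma region_extends (T : R) : 0 <= T -> in_region K (f T) (m T) ->
  exists del, 0 < del /\ forall s, T <= s <= T + del -> in_region K (f s) (m s).
Proof.
  intros HT HrT. destruct (rates_bounded_after T HT HrT) as [del [M [Hdel HM]]].
  destruct (solution_right_cont T HT) as [Hfc Hmc].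
  exists del. split; [exact Hdel|]. intros s Hs.
  destruct (Req_dec s T) as [->|Hne]; [exact HrT|].
  destruct HrT as [HfT [HmT HsT]].
  assert (Hf : forall u, T < u <= T + del -> 0 <= f u).
  { intros u Hu. apply (nonneg_preserved f (fun t => rate_f (f t) (m t)) M T u); try tauto.
    - intros t Ht. apply solution_derive_rates. lra.
    - intros t Ht. apply HM. lra. }
  assert (Hm : forall u, T < u <= T + del -> 0 <= m u).
  { intros u Hu. apply (nonneg_preserved m (fun t => rate_m (f t) (m t)) M T u); try tauto.
    - intros t Ht. apply solution_derive_rates. lra.
    - intros t Ht. apply HM. lra. }
  split; [apply Hf; lra|split; [apply Hm; lra|]].
  apply (le_level_preserved (fun s => f s + m s)
    (fun t => rhs_f beta delta K d1 eta1 (f t) (m t) + rhs_m beta delta K d2 eta2 (f t) (m t))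
    K T s); [lra| | |apply right_cont_plus; assumption|exact HsT].
  - intros t Ht. apply solution_derive_sum. lra.
  - intros t Ht HKt. apply rhs_sum_nonpos_outside; [apply Hf|apply Hm|]; lra.
Qed.

Lemma region_closed (T : R) : 0 < T ->
  (forall s, 0 <= s < T -> in_region K (f s) (m s)) -> in_region K (f T) (m T).
Proof.
  intros HT Hbefore. destruct (solution_continuous T HT) as [Hfc Hmc].
  split; [|split].
  - assert (- f T <= 0); [|lra].
    apply (continuous_le_of_le_before (fun s => - f s) 0 T HT (continuous_opp f T Hfc)).
    intros s Hs. destruct (Hbefore s Hs) as [? _]. lra.
  - assert (- m T <= 0); [|lra].
    apply (continuous_le_of_le_before (fun s => - m s) 0 T HT (continuous_opp m T Hmc)).
    intros s Hs. destruct (Hbefore s Hs) as [_ [? _]]. lra.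
  - apply (continuous_le_of_le_before (fun s => f s + m s) K T HT (continuous_plus f m T Hfc Hmc)).
    intros s Hs. apply (Hbefore s Hs).
Qed.

Hypothesis Hinit : in_region K (f 0) (m 0).

Lemma region_invariant (t : R) : 0 <= t -> in_region K (f t) (m t).
Proof.
  revert t. apply (continuous_induction (fun t => in_region K (f t) (m t)));
    [exact Hinit| |exact region_closed].
  intros T HT Hupto. apply region_extends; [exact HT|]. apply Hupto. lra.
Qed.

Lemma total_le_exp_decay (t : R) : 0 <= t ->
  f t + m t <= (f 0 + m 0) * exp (- decay_rate * t).
Proof.
  apply (le_exp_decay (fun s => f s + m s)
    (fun t => rhs_f beta delta K d1 eta1 (f t) (m t) + rhs_m beta delta K d2 eta2 (f t) (m t))).
  - destruct (solution_right_cont 0 (Rle_refl 0)). apply right_cont_plus; assumption.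
  - exact solution_derive_sum.
  - intros s Hs. apply rhs_sum_le_decay, region_invariant. lra.
Qed.

End Solution.

End Model.

Theorem mainTheorem10 (beta delta K d1 d2 eta1 eta2 : R) :
  0 < beta < 1 -> 0 < delta < 1 -> 0 < K -> 0 < d1 -> 0 < d2 ->
  0 <= eta1 -> 0 <= eta2 ->
  beta * K < 2 * delta + eta1 / (K + d1) - eta2 / d2 ->
  delta > eta2 / d2 ->
  GAS_origin beta delta K d1 d2 eta1 eta2.
Proof.
  intros Hbeta _ HK Hd1 Hd2 Heta1 Heta2 Hstab Hdelta.
  assert (Hbeta0 : 0 <= beta) by lra.
  pose proof (decay_rate_pos _ _ _ _ _ _ _ HK Hd1 Hd2 Heta1 Heta2 Hdelta Hstab) as Hc.
  set (c := decay_rate beta delta K d1 d2 eta1 eta2) in *.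
  assert (Hbound : forall f m, is_solution beta delta K d1 d2 eta1 eta2 f m ->
    in_region K (f 0) (m 0) -> forall t, 0 <= t ->
    in_region K (f t) (m t) /\ f t + m t <= (f 0 + m 0) * exp (- c * t)).
  { intros f m Hsol Hinit t Ht. split.
    - exact (region_invariant _ _ _ _ _ _ _ Hbeta0 HK Hd1 Hd2 Heta1 Heta2 Hdelta
               f m Hsol Hinit t Ht).
    - exact (total_le_exp_decay _ _ _ _ _ _ _ Hbeta0 HK Hd1 Hd2 Heta1 Heta2 Hdelta
               f m Hsol Hinit t Ht). }
  split; [unfold rhs_f, Lfun, Rdiv; ring|split; [unfold rhs_m, Lfun, Rdiv; ring|split]].
  - intros eps Heps. exists (eps / 2). split; [lra|].
    intros f m Hsol Hinit Hr t Ht.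
    destruct (Hbound f m Hsol Hinit t Ht) as [[Hft [Hmt _]] Hdecay].
    destruct Hinit as [Hf0 [Hm0 _]].
    pose proof (exp_decay_le_1 c t (Rlt_le _ _ Hc) Ht).
    pose proof (eucl_le_add (f t) (m t) Hft Hmt). pose proof (add_le_2eucl (f 0) (m 0) Hf0 Hm0).
    assert ((f 0 + m 0) * exp (- c * t) <= f 0 + m 0) by (pose proof (exp_pos (- c * t)); nra).
    lra.
  - intros f m Hsol Hinit.
    split; apply (is_lim_0_of_exp_bound _ (f 0 + m 0) c Hc); intros t Ht;
      destruct (Hbound f m Hsol Hinit t Ht) as [[Hft [Hmt _]] Hdecay]; lra.
Qed.
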